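(* Let $n$ be an odd integer $\ge 3$, $F_2$ the free group on $a,b$, and $R_{\mathrm{Heis}_n}$ the kernel of the surjection $F_2\to H_n$ with $a\mapsto\alpha$, $b\mapsto\beta$. Then $R_{\mathrm{Heis}_n}$ is a characteristic subgroup of $F_2$, i.e. $\phi(R_{\mathrm{Heis}_n})=R_{\mathrm{Heis}_n}$ for every $\phi\in\operatorname{Aut}(F_2)$.
   Context: $H_n$ is the group of $3\times3$ upper unitriangular matrices over $\mathbb{Z}/n\mathbb{Z}$; $\alpha$ has entry $1$ at position $(1,2)$ and $\beta$ has entry $1$ at position $(2,3)$, all other off-diagonal entries zero. *)

From HB Require Import structures.
From mathcomp Require Import all_boot all_order all_algebra.
Set Implicit Arguments. Unset Strict Implicit. Unset Printing Implicit Defensive.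
Import GRing.Theory.
Local Open Scope ring_scope.

(* A letter is (g, e): g = false for a, true for b; e = true for the inverse. *)
Definition letter := (bool * bool)%type.
Definition linv (x : letter) : letter := (x.1, ~~ x.2).

Fixpoint reducedb (s : seq letter) : bool :=
  match s with
  | x :: ((y :: _) as s') => (y != linv x) && reducedb s'
  | _ => true
  end.

Definition ccons (x : letter) (s : seq letter) : seq letter :=
  match s with
  | y :: s' => if y == linv x then s' else x :: s
  | [::] => [:: x]
  end.
Definition reduce (s : seq letter) : seq letter := foldr ccons [::] s.

Lemma reducedb_ccons x s : reducedb s -> reducedb (ccons x s).
Proof.
case: s => [|y s] //= Hs.
case: ifP => Hy.
  by case: s Hs => [|z s] //= /andP[].
by rewrite /= Hy Hs.
Qed.

Lemma reducedb_reduce s : reducedb (reduce s).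
Proof. by elim: s => [|x s IH] //=; apply: reducedb_ccons. Qed.

Record F2 := MkF2 { wordF2 : seq letter; wordF2_red : reducedb wordF2 }.

Definition mulF2 (u v : F2) : F2 :=
  MkF2 (reducedb_reduce (wordF2 u ++ wordF2 v)).

Definition F2_hom (phi : F2 -> F2) : Prop :=
  forall u v, phi (mulF2 u v) = mulF2 (phi u) (phi v).
Definition F2_aut (phi : F2 -> F2) : Prop := F2_hom phi /\ bijective phi.

(* H_n is the group of upper unitriangular 3x3 matrices over 'Z_n;
   alpha = 1 + E_{12}, beta = 1 + E_{23} (1-based positions). *)
Definition i1 : 'I_3 := inord 0.
Definition i2 : 'I_3 := inord 1.
Definition i3 : 'I_3 := inord 2.

Definition alphaH (n : nat) : 'M['Z_n]_3 := 1%:M + delta_mx i1 i2.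
Definition betaH (n : nat) : 'M['Z_n]_3 := 1%:M + delta_mx i2 i3.

Definition letter_img (n : nat) (x : letter) : 'M['Z_n]_3 :=
  let g := if x.1 then betaH n else alphaH n in
  if x.2 then invmx g else g.

Definition heis_map (n : nat) (w : F2) : 'M['Z_n]_3 :=
  foldr (fun x M => letter_img n x *m M) 1%:M (wordF2 w).

Definition R_Heis (n : nat) (w : F2) : Prop := heis_map n w = 1%:M.

From HB Require Import structures.
From mathcomp Require Import all_boot all_order all_algebra ring.
Set Implicit Arguments. Unset Strict Implicit. Unset Printing Implicit Defensive.
Import GRing.Theory.

(* When 2 is invertible in a commutative ring R, the Heisenberg group H(R) of
   unitriangular 3x3 matrices is relatively free on alpha and beta: every
   assignment alpha |-> X, beta |-> Y extends to an endomorphism of H(R).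
   Hence a word that is trivial at (alpha, beta) is trivial at every pair
   (X, Y) of H(R).  For an endomorphism phi of F_2, the image of phi(w) in H_n
   is w evaluated at the images of phi(a) and phi(b), so the kernel is fully
   invariant; applied to phi and its inverse this gives phi(R) = R.  For odd n,
   2 is a unit of Z/nZ. *)

Section WordValue.
Variable G : groupType.
Local Open Scope group_scope.

Definition letter_val (X Y : G) (x : letter) : G :=
  let g := if x.1 then Y else X in if x.2 then g^-1 else g.

Definition word_val (X Y : G) (s : seq letter) : G :=
  foldr (fun x g => letter_val X Y x * g) 1 s.

Lemma word_val_cat X Y s1 s2 :
  word_val X Y (s1 ++ s2) = word_val X Y s1 * word_val X Y s2.
Proof. by elim: s1 => [|x s IH] /=; rewrite ?mul1g // IH mulgA. Qed.

Lemma letter_val_linv X Y x : letter_val X Y x * letter_val X Y (linv x) = 1.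
Proof. by case: x => [[] []]; rewrite /letter_val /= ?mulgV ?mulVg. Qed.

Lemma word_val_ccons X Y x s :
  word_val X Y (ccons x s) = letter_val X Y x * word_val X Y s.
Proof.
case: s => [|y s] //=; case: ifP => // /eqP ->.
by rewrite mulgA letter_val_linv mul1g.
Qed.

Lemma word_val_reduce X Y s : word_val X Y (reduce s) = word_val X Y s.
Proof. by elim: s => [|x s IH] //=; rewrite word_val_ccons IH. Qed.

End WordValue.

Section WordValueMorphism.
Variables (G H : groupType) (f : G -> H).
Local Open Scope group_scope.
Hypothesis fM : {morph f : u v / u * v}.

Lemma gmorph1 : f 1 = 1.
Proof. by apply: (mulIg (f 1)); rewrite -fM !mul1g. Qed.

Lemma gmorphV u : f u^-1 = (f u)^-1.
Proof. by apply/esym/mulg1_eq; rewrite -fM mulgV gmorph1. Qed.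

Lemma gmorph_word_val X Y s : f (word_val X Y s) = word_val (f X) (f Y) s.
Proof.
elim: s => [|[[] []] s IH] /=; rewrite ?gmorph1 // fM IH //.
all: by rewrite /letter_val /= ?gmorphV.
Qed.
End WordValueMorphism.

Lemma reduce_reducedb s : reducedb s -> reduce s = s.
Proof.
elim: s => [|x s IH] //= Hs.
have Hs' : reducedb s by case: s Hs {IH} => [|y s] // /andP[].
rewrite IH //; case: s Hs {IH Hs'} => [|y s] //= /andP[H _].
by rewrite (negbTE H).
Qed.

Lemma wordF2_inj : injective wordF2.
Proof.
move=> [u Hu] [v Hv] /= Euv; subst v.
by rewrite (bool_irrelevance Hu Hv).
Qed.

Definition F2_of_word (s : seq letter) : F2 := MkF2 (reducedb_reduce s).

Definition F2_gen (g : bool) : F2 := F2_of_word [:: (g, false)].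

Lemma wordF2K : cancel wordF2 F2_of_word.
Proof. by move=> w; apply/wordF2_inj/reduce_reducedb/wordF2_red. Qed.

Lemma F2_of_word_cons x s :
  F2_of_word (x :: s) = mulF2 (F2_of_word [:: x]) (F2_of_word s).
Proof. by apply: wordF2_inj; rewrite /= (reduce_reducedb (reducedb_reduce s)). Qed.

Section FreeGroupHom.
Variable G : groupType.
Local Open Scope group_scope.

Lemma word_val_mulF2 (X Y : G) u v :
  word_val X Y (wordF2 (mulF2 u v))
  = word_val X Y (wordF2 u) * word_val X Y (wordF2 v).
Proof. by rewrite word_val_reduce word_val_cat. Qed.

Variable psi : F2 -> G.
Hypothesis psiM : forall u v, psi (mulF2 u v) = psi u * psi v.

Lemma F2_hom1 : psi (F2_of_word [::]) = 1.
Proof.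
have ee : mulF2 (F2_of_word [::]) (F2_of_word [::]) = F2_of_word [::].
  exact: wordF2_inj.
by apply: (mulIg (psi (F2_of_word [::]))); rewrite /= -psiM ee mul1g.
Qed.

Lemma F2_hom_letter x :
  psi (F2_of_word [:: x]) = letter_val (psi (F2_gen false)) (psi (F2_gen true)) x.
Proof.
case: x => -[] [] //=; apply/esym/mulg1_eq; rewrite -F2_hom1 -psiM.
all: by congr psi; apply: wordF2_inj.
Qed.

Lemma F2_hom_word_val w :
  psi w = word_val (psi (F2_gen false)) (psi (F2_gen true)) (wordF2 w).
Proof.
rewrite -{1}(wordF2K w); elim: (wordF2 w) => [|x s IH]; first exact: F2_hom1.
by rewrite F2_of_word_cons psiM IH F2_hom_letter.
Qed.
End FreeGroupHom.

Section HeisenbergGroup.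
Variable R : comNzRingType.
Local Open Scope ring_scope.

Definition heis : Type := (R * R * R)%type.
HB.instance Definition _ := Choice.on heis.

Definition heis_mul (t u : heis) : heis :=
  (t.1.1 + u.1.1, t.1.2 + u.1.2, t.2 + u.2 + t.1.1 * u.1.2).
Definition heis_one : heis := (0, 0, 0).
Definition heis_inv (t : heis) : heis :=
  (- t.1.1, - t.1.2, - t.2 + t.1.1 * t.1.2).

Fact heis_mulA : associative heis_mul.
Proof.
by move=> [[? ?] ?] [[? ?] ?] [[? ?] ?]; rewrite /heis_mul /=; congr (_, _, _); ring.
Qed.
Fact heis_mul1g : left_id heis_one heis_mul.
Proof. by move=> [[? ?] ?]; rewrite /heis_mul /=; congr (_, _, _); ring. Qed.
Fact heis_mulg1 : right_id heis_one heis_mul.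
Proof. by move=> [[? ?] ?]; rewrite /heis_mul /=; congr (_, _, _); ring. Qed.
Fact heis_mulVg : left_inverse heis_one heis_inv heis_mul.
Proof. by move=> [[? ?] ?]; rewrite /heis_mul /=; congr (_, _, _); ring. Qed.
Fact heis_mulgV : right_inverse heis_one heis_inv heis_mul.
Proof. by move=> [[? ?] ?]; rewrite /heis_mul /=; congr (_, _, _); ring. Qed.

HB.instance Definition _ :=
  isGroup.Build heis heis_mulA heis_mul1g heis_mulg1 heis_mulVg heis_mulgV.

Lemma heis_mulE t u : (t * u)%g = heis_mul t u.
Proof. by []. Qed.

Definition heis_alpha : heis := (1, 0, 0).
Definition heis_beta : heis := (0, 1, 0).

Variable h : R.

(* The linear part is (a, b) |-> a X + b Y, the centre is scaled by the
   determinant, and h (a ^+ 2 - a) stands for 'C(a, 2) (h = 1/2): this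
   quadratic correction is what makes the map multiplicative. *)
Definition heis_endo (X Y t : heis) : heis :=
  let: (x1, x2, x3) := X in let: (y1, y2, y3) := Y in let: (a, b, c) := t in
  (x1 * a + y1 * b, x2 * a + y2 * b,
   (x1 * y2 - x2 * y1) * c + x3 * a + y3 * b + x2 * y1 * a * b
   + h * (x1 * x2 * (a ^+ 2 - a) + y1 * y2 * (b ^+ 2 - b))).

Hypothesis h2 : h *+ 2 = 1.

Lemma heis_endoM X Y : {morph heis_endo X Y : t u / (t * u)%g}.
Proof.
case: X Y => [[x1 x2] x3] [[y1 y2] y3] [[a b] c] [[d e] f].
by rewrite heis_mulE /heis_mul /=; congr (_, _, _); rewrite /=; ring: h2.
Qed.

Lemma heis_endo_alpha X Y : heis_endo X Y heis_alpha = X.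
Proof. by case: X Y => [[x1 x2] x3] [[y1 y2] y3]; congr (_, _, _); ring. Qed.

Lemma heis_endo_beta X Y : heis_endo X Y heis_beta = Y.
Proof. by case: X Y => [[x1 x2] x3] [[y1 y2] y3]; congr (_, _, _); ring. Qed.

Lemma word_val_heis_endo (X Y : heis) s :
  word_val X Y s = heis_endo X Y (word_val heis_alpha heis_beta s).
Proof.
by rewrite (gmorph_word_val (heis_endoM X Y)) heis_endo_alpha heis_endo_beta.
Qed.

Lemma word_val_heis_eq1 (X Y : heis) s :
  word_val heis_alpha heis_beta s = 1%g -> word_val X Y s = 1%g.
Proof. by rewrite (word_val_heis_endo X Y) => ->; apply/gmorph1/heis_endoM. Qed.

End HeisenbergGroup.

Lemma i1E : i1 = Ordinal (isT : 0 < 3). Proof. exact/val_inj/inordK. Qed.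
Lemma i2E : i2 = Ordinal (isT : 1 < 3). Proof. exact/val_inj/inordK. Qed.
Lemma i3E : i3 = Ordinal (isT : 2 < 3). Proof. exact/val_inj/inordK. Qed.

Section HeisenbergMatrix.
Variable R : comUnitRingType.
Local Open Scope ring_scope.

Definition heis_mx (t : heis R) : 'M[R]_3 :=
  1%:M + t.1.1 *: delta_mx i1 i2 + t.1.2 *: delta_mx i2 i3 + t.2 *: delta_mx i1 i3.

Lemma heis_mxM t u : heis_mx (t * u)%g = heis_mx t *m heis_mx u.
Proof.
case: t u => [[a b] c] [[d e] f]; apply/matrixP => i j.
rewrite !mxE !big_ord_recr big_ord0 /= !mxE i1E i2E i3E.
case: i => [[|[|[|i]]] Hi] //; case: j => [[|[|[|j]]] Hj] //=; ring.
Qed.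

Lemma heis_mx1 : heis_mx 1%g = 1%:M.
Proof. by rewrite /heis_mx /= !scale0r !addr0. Qed.

Lemma heis_mx_inj : injective heis_mx.
Proof.
move=> [[a b] c] [[d e] f] /matrixP E; move: (E i1 i2) (E i2 i3) (E i1 i3).
by rewrite !mxE i1E i2E i3E /= !(mulr0, mulr1, add0r, addr0) => -> -> ->.
Qed.

Lemma heis_mxV t : heis_mx t^-1%g = invmx (heis_mx t).
Proof.
have tV : heis_mx t *m heis_mx t^-1%g = 1%:M.
  by rewrite -heis_mxM mulgV heis_mx1.
by rewrite -[LHS]mul1mx -(mulVmx (mulmx1_unit tV).1) -mulmxA tV mulmx1.
Qed.

End HeisenbergMatrix.

Section HeisenbergZp.
Variable n : nat.
Local Open Scope ring_scope.

Lemma alphaH_heis_mx : alphaH n = heis_mx (heis_alpha 'Z_n).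
Proof. by rewrite /heis_mx /= scale1r !scale0r !addr0. Qed.

Lemma betaH_heis_mx : betaH n = heis_mx (heis_beta 'Z_n).
Proof. by rewrite /heis_mx /= scale1r !scale0r !addr0. Qed.

Lemma heis_map_word_val w :
  heis_map n w = heis_mx (word_val (heis_alpha 'Z_n) (heis_beta 'Z_n) (wordF2 w)).
Proof.
rewrite /heis_map; elim: (wordF2 w) => [|x s IH] /=; first by rewrite heis_mx1.
rewrite IH heis_mxM; congr (_ *m _).
by case: x => -[] []; rewrite /letter_img /letter_val /= ?heis_mxV
  -?alphaH_heis_mx -?betaH_heis_mx.
Qed.

Lemma R_HeisE w :
  R_Heis n w <-> word_val (heis_alpha 'Z_n) (heis_beta 'Z_n) (wordF2 w) = 1%g.
Proof.
rewrite /R_Heis heis_map_word_val -heis_mx1.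
by split=> [/heis_mx_inj | ->].
Qed.

End HeisenbergZp.

Lemma Zp_half2 n : odd n -> 1 < n -> ((n.+1)./2%:R *+ 2 = 1 :> 'Z_n)%R.
Proof.
move=> odd_n n_gt1.
by rewrite -mulrnA muln2 halfK /= odd_n subn0 -natr1 pchar_Zp // add0r.
Qed.

Lemma R_Heis_fully_invariant n phi : odd n -> 1 < n -> F2_hom phi ->
  forall w, R_Heis n w -> R_Heis n (phi w).
Proof.
move=> odd_n n_gt1 phiM w /R_HeisE Rw; apply/R_HeisE.
pose psi u := word_val (heis_alpha 'Z_n) (heis_beta 'Z_n) (wordF2 (phi u)).
have psiM u v : psi (mulF2 u v) = (psi u * psi v)%g.
  by rewrite /psi phiM word_val_mulF2.
rewrite -/(psi w) (F2_hom_word_val psiM).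
exact: (word_val_heis_eq1 (Zp_half2 odd_n n_gt1)).
Qed.

Theorem lemma2p16 (n : nat) (Hn : 3 <= n) (Hodd : odd n) (phi : F2 -> F2) :
  F2_aut phi ->
  (* phi(R) = R, i.e. phi(R) ⊆ R and R ⊆ phi(R) *)
  (forall w, R_Heis n w -> R_Heis n (phi w)) /\
  (forall y, R_Heis n y -> exists w, R_Heis n w /\ phi w = y).
Proof.
move=> [phiM [phi' phiK phi'K]].
have n_gt1 : 1 < n by apply: leq_trans Hn.
have phi'M : F2_hom phi'.
  by move=> u v; apply: (can_inj phiK); rewrite phiM !phi'K.
split=> [|y Ry]; first exact: R_Heis_fully_invariant.
by exists (phi' y); split; [apply: R_Heis_fully_invariant | apply: phi'K].
Qed.
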